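(* Let $f:\mathbb{R}^n\to\mathbb{R}$, $g:\mathbb{R}^m\to\mathbb{R}$, $Q:\mathbb{R}^n\times\mathbb{R}^m\to\mathbb{R}\cup\{+\infty\}$ and $L(x,y)=f(x)+Q(x,y)+g(y)$ satisfy: (A1) $L$ is bounded below; $f,g$ are continuously differentiable with $\nabla f$, $\nabla g$ Lipschitz continuous with constants $L_{\nabla f}$, $L_{\nabla g}$; $Q$ is proper and lower semicontinuous; $\phi_1:\mathbb{R}^n\to\mathbb{R}$, $\phi_2:\mathbb{R}^m\to\mathbb{R}$ are differentiable, $\phi_i$ is $\theta_i$-strongly convex with $\theta_1>L_{\nabla f}$, $\theta_2>L_{\nabla g}$, and $\nabla\phi_i$ is $\eta_i$-Lipschitz continuous ($i=1,2$); (A2) $L$ is coercive and $\mathrm{dom}\,Q$ is closed; for all $(x,y)\in\mathrm{dom}\,Q$, $\partial_xQ(x,y)\times\partial_yQ(x,y)\subset\partial Q(x,y)$; and $Q(x,y)=q(x,y)+h(x)$, where $h:\mathbb{R}^n\to\mathbb{R}\cup\{+\infty\}$ is continuous on its domain, $q$ is continuous on $\mathrm{dom}\,Q$, for every $y$ the partial function $q(\cdot,y)$ is continuously differentiable, and for each bounded subset $D_1\times D_2\subset\mathrm{dom}\,Q$ there exists $\xi>0$ such that $\|\nabla_xq(\bar x,y)-\nabla_xq(\bar x,\bar y)\|\le\xi\|y-\bar y\|$ for all $\bar x\in D_1$, $y,\bar y\in D_2$. Let $z_k=(x_k,y_k)$, together with $(\hat x_k,\hat y_k)$, be generated by the following algorithm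 with initial point $z_0=(x_0,y_0)$: set $(\hat x_0,\hat y_0)=(x_0,y_0)$, choose $\alpha_{\max},\beta_{\max}\ge0$ with $\alpha_{\max}+\beta_{\max}<1$ and $\alpha_k\in[0,\alpha_{\max}]$, $\beta_k\in[0,\beta_{\max}]$; for $k=0,1,\dots$: 1. $x_{k+1}\in\arg\min_{x}\{Q(x,\hat y_k)+\langle\nabla f(\hat x_k),x\rangle+D_{\phi_1}(x,\hat x_k)\}$, $y_{k+1}\in\arg\min_{y}\{Q(x_{k+1},y)+\langle\nabla g(\hat y_k),y\rangle+D_{\phi_2}(y,\hat y_k)\}$; 2. $u_{k+1}=x_{k+1}+\alpha_k(x_{k+1}-x_k)+\beta_k(x_k-x_{k-1})$, $v_{k+1}=y_{k+1}+\alpha_k(y_{k+1}-y_k)+\beta_k(y_k-y_{k-1})$; 3. if $L(u_{k+1},v_{k+1})\le L(x_{k+1},y_{k+1})$ then $(\hat x_{k+1},\hat y_{k+1})=(u_{k+1},v_{k+1})$, else $(\hat x_{k+1},\hat y_{k+1})=(x_{k+1},y_{k+1})$. Let $\mathcal{L}(z_0)$ be the set of cluster points of $\{z_k\}$, i.e. the set of $\hat z\in\mathbb{R}^n\times\mathbb{R}^m$ for which there is a strictly increasing sequence $\{k_j\}$ with $z_{k_j}\to\hat z$. Then: (i) $\mathcal{L}(z_0)$ is a nonempty compact set, and $L$ is finite and constant on $\mathcal{L}(z_0)$; (ii) $\mathcal{L}(z_0)\subset\mathrm{crit}\,L$; (iii) $\lim_{k\to\infty}\mathrm{dist}(z_k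,\mathcal{L}(z_0))=0$.
   Context: For a convex differentiable $\phi$, $D_\phi(x,y)=\phi(x)-\phi(y)-\langle\nabla\phi(y),x-y\rangle$ (Bregman distance). $\phi$ is $\theta$-strongly convex if $\phi-\frac\theta2\|\cdot\|^2$ is convex. For a proper lsc $F$, the Fréchet subdifferential $\hat\partial F(x)$ is the set of $v$ with $\liminf_{y\to x}\frac{F(y)-F(x)-\langle v,y-x\rangle}{\|y-x\|}\ge0$ (empty if $x\notin\mathrm{dom}F$), and the (limiting) subdifferential is $\partial F(x)=\{v:\exists x_k\to x, F(x_k)\to F(x), v_k\in\hat\partial F(x_k), v_k\to v\}$. $\partial_xQ$, $\partial_yQ$ are the limiting subdifferentials of the partial functions. $\mathrm{crit}\,L=\{z: 0\in\partial L(z)\}$ is the set of critical points. $(x_{-1},y_{-1})$ in step 2 is a given initial point (e.g. $(x_0,y_0)$). *)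

(* R^d is represented by row vectors 'rV[R]_d; the product space
   R^n x R^m is identified with 'rV[R]_(n+m) via row_mx / lsubmx / rsubmx
   (this identification is isometric for the Euclidean norms below). *)
From HB Require Import structures.
From mathcomp Require Import all_boot all_order all_algebra.
From mathcomp Require Import all_classical all_reals all_analysis.
Set Implicit Arguments. Unset Strict Implicit. Unset Printing Implicit Defensive.
Import Order.TTheory GRing.Theory Num.Theory.
Import numFieldNormedType.Exports.
Local Open Scope classical_set_scope.
Local Open Scope ring_scope.

Section Defs.
Variable R : realType.

Definition dotv {d : nat} (u v : 'rV[R]_d) : R := \sum_(i < d) u ord0 i * v ord0 i.
Definition normv {d : nat} (u : 'rV[R]_d) : R := Num.sqrt (dotv u u).

Definition cvgv {d : nat} (u : nat -> 'rV[R]_d) (a : 'rV[R]_d) : Prop :=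
  forall e : R, 0 < e -> exists N : nat, forall k, (N <= k)%N -> normv (u k - a) < e.
Definition cvgr (u : nat -> R) (a : R) : Prop :=
  forall e : R, 0 < e -> exists N : nat, forall k, (N <= k)%N -> `|u k - a| < e.

Definition contv {d p : nat} (G : 'rV[R]_d -> 'rV[R]_p) : Prop :=
  forall x (e : R), 0 < e -> exists2 del : R, 0 < del &
    forall y, normv (y - x) < del -> normv (G y - G x) < e.

Definition lipschitzv {d p : nat} (G : 'rV[R]_d -> 'rV[R]_p) (c : R) : Prop :=
  forall x y, normv (G x - G y) <= c * normv (x - y).

Definition has_grad {d : nat} (F : 'rV[R]_d -> R) (G : 'rV[R]_d -> 'rV[R]_d) : Prop :=
  forall x (e : R), 0 < e -> exists2 del : R, 0 < del &
    forall y, normv (y - x) < del ->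
      `|F y - F x - dotv (G x) (y - x)| <= e * normv (y - x).

Definition convexv {d : nat} (F : 'rV[R]_d -> R) : Prop :=
  forall x y (t : R), 0 <= t <= 1 ->
    F (t *: x + (1 - t) *: y) <= t * F x + (1 - t) * F y.
Definition strongly_convex {d : nat} (F : 'rV[R]_d -> R) (theta : R) : Prop :=
  convexv (fun x => F x - theta / 2 * normv x ^+ 2).

Definition bregman {d : nat} (phi : 'rV[R]_d -> R) (dphi : 'rV[R]_d -> 'rV[R]_d)
  (x y : 'rV[R]_d) : R := phi x - phi y - dotv (dphi y) (x - y).

Definition domain {d : nat} (F : 'rV[R]_d -> \bar R) : set 'rV[R]_d :=
  [set x | (F x < +oo)%E].
Definition proper_fun {d : nat} (F : 'rV[R]_d -> \bar R) : Prop :=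
  (forall x, F x != -oo%E) /\ exists x, (F x < +oo)%E.
Definition lsc {d : nat} (F : 'rV[R]_d -> \bar R) : Prop :=
  forall x (a : R), (a%:E < F x)%E -> exists2 del : R, 0 < del &
    forall y, normv (y - x) < del -> (a%:E < F y)%E.

(* Frechet subdifferential: v in \hat\partial F(x) iff x in dom F and
   liminf_{y->x} (F y - F x - <v,y-x>)/|y-x| >= 0 (written out) *)
Definition frechet_sub {d : nat} (F : 'rV[R]_d -> \bar R) (x v : 'rV[R]_d) : Prop :=
  F x \is a fin_num /\
  forall e : R, 0 < e -> exists2 del : R, 0 < del &
    forall y, normv (y - x) < del ->
      (F x + (dotv v (y - x) - e * normv (y - x))%:E <= F y)%E.

Definition lim_sub {d : nat} (F : 'rV[R]_d -> \bar R) (x v : 'rV[R]_d) : Prop :=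
  F x \is a fin_num /\
  exists (xs vs : nat -> 'rV[R]_d),
    [/\ cvgv xs x, cvgr (fun k => fine (F (xs k))) (fine (F x)),
        forall k, frechet_sub F (xs k) (vs k) & cvgv vs v].

Definition crit {d : nat} (F : 'rV[R]_d -> \bar R) : set 'rV[R]_d :=
  [set z | lim_sub F z 0].

Definition distv {d : nat} (z : 'rV[R]_d) (S : set 'rV[R]_d) : R :=
  inf [set normv (z - s) | s in S].

Definition cluster_points {d : nat} (z : nat -> 'rV[R]_d) : set 'rV[R]_d :=
  [set zh | exists phi : nat -> nat,
     (forall j, (phi j < phi j.+1)%N) /\ cvgv (fun j => z (phi j)) zh].

Definition boundedv {d : nat} (S : set 'rV[R]_d) : Prop :=
  exists M : R, forall s, S s -> normv s <= M.

Definition uncurryv {n m : nat} {T : Type} (F : 'rV[R]_n -> 'rV[R]_m -> T)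
  (z : 'rV[R]_(n + m)) : T := F (lsubmx z) (rsubmx z).
Definition Lobj {n m : nat} (f : 'rV[R]_n -> R) (Q : 'rV[R]_n -> 'rV[R]_m -> \bar R)
  (g : 'rV[R]_m -> R) (x : 'rV[R]_n) (y : 'rV[R]_m) : \bar R :=
  ((f x)%:E + Q x y + (g y)%:E)%E.

End Defs.

(* Each block step decreases L by at least
   (theta1 - Lf)/2 |x_{k+1} - xh_k|^2 + (theta2 - Lg)/2 |y_{k+1} - yh_k|^2,
   by the descent lemma for f and g and the strong convexity of the Bregman
   kernels; the extrapolated point is only accepted when it does not increase L.
   Hence L(z_k) decreases to a limit l, the steps x_{k+1} - xh_k and
   y_{k+1} - yh_k vanish, and coercivity keeps the iterates bounded, which gives
   (i) and (iii) up to the value of L.  The optimality conditions of the two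
   subproblems produce limiting subgradients of L at z_{k+1} whose norms are
   bounded by a multiple of the steps.  As L is continuous relative to the
   closed set dom Q, it converges to L(zh) along every subsequence z_{k_j} -> zh,
   so L = l on the cluster set, and the closedness of the graph of the limiting
   subdifferential gives 0 in dL(zh). *)

From HB Require Import structures.
From mathcomp Require Import all_boot all_order all_algebra.
From mathcomp Require Import all_classical all_reals all_analysis.
From mathcomp Require Import ring lra.
Import Order.TTheory GRing.Theory Num.Theory.
Import numFieldNormedType.Exports.
Local Open Scope classical_set_scope.
Local Open Scope ring_scope.

Set Implicit Arguments.
Unset Strict Implicit.
Unset Printing Implicit Defensive.

Section Euclidean.
Context {R : realType} {d : nat}.
Implicit Types (a : R) (u v w : 'rV[R]_d).

Lemma dotvC u v : dotv u v = dotv v u.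
Proof. by apply: eq_bigr => i _; rewrite mulrC. Qed.

Lemma dotvDl u w v : dotv (u + w) v = dotv u v + dotv w v.
Proof. by rewrite /dotv -big_split; apply: eq_bigr => i _; rewrite mxE mulrDl. Qed.

Lemma dotvZl a u v : dotv (a *: u) v = a * dotv u v.
Proof. by rewrite /dotv mulr_sumr; apply: eq_bigr => i _; rewrite mxE mulrA. Qed.

Lemma dotvNl u v : dotv (- u) v = - dotv u v.
Proof. by rewrite -scaleN1r dotvZl mulN1r. Qed.

Lemma dotvBl u w v : dotv (u - w) v = dotv u v - dotv w v.
Proof. by rewrite dotvDl dotvNl. Qed.

Lemma dotvDr u w v : dotv v (u + w) = dotv v u + dotv v w.
Proof. by rewrite dotvC dotvDl !(dotvC v). Qed.

Lemma dotvZr a u v : dotv v (a *: u) = a * dotv v u.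
Proof. by rewrite dotvC dotvZl dotvC. Qed.

Lemma dotvNr u v : dotv v (- u) = - dotv v u.
Proof. by rewrite dotvC dotvNl dotvC. Qed.

Lemma dotvBr u w v : dotv v (u - w) = dotv v u - dotv v w.
Proof. by rewrite dotvDr dotvNr. Qed.

Lemma dotv0r v : dotv v 0 = 0.
Proof. by rewrite /dotv big1 // => i _; rewrite mxE mulr0. Qed.

Lemma dotv0l v : dotv 0 v = 0.
Proof. by rewrite dotvC dotv0r. Qed.

Lemma dotvv_ge0 u : 0 <= dotv u u.
Proof. by apply: sumr_ge0 => i _; rewrite -expr2 sqr_ge0. Qed.

Lemma normv_ge0 u : 0 <= normv u.
Proof. exact: sqrtr_ge0. Qed.

Lemma sqr_normv u : normv u ^+ 2 = dotv u u.
Proof. by rewrite /normv sqr_sqrtr // dotvv_ge0. Qed.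

Lemma normv_eq0 u : normv u = 0 -> u = 0.
Proof.
move=> u0; apply/rowP => i; rewrite mxE.
have sq_ge0 j : true -> 0 <= u ord0 j * u ord0 j by rewrite -expr2 sqr_ge0.
have dotv0 : dotv u u = 0 by rewrite -sqr_normv u0 expr0n.
by have /(_ i isT)/eqP := psumr_eq0P sq_ge0 dotv0; rewrite mulf_eq0 orbb => /eqP.
Qed.

Lemma normv0 : normv (0 : 'rV[R]_d) = 0.
Proof. by rewrite /normv dotv0r sqrtr0. Qed.

Lemma normvZ a u : normv (a *: u) = `|a| * normv u.
Proof. by rewrite /normv dotvZl dotvZr mulrA -expr2 sqrtrM ?sqr_ge0 // sqrtr_sqr. Qed.

Lemma normvN u : normv (- u) = normv u.
Proof. by rewrite -scaleN1r normvZ normrN1 mul1r. Qed.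

Lemma normvBC u v : normv (u - v) = normv (v - u).
Proof. by rewrite -normvN opprB. Qed.

Lemma dotv_le u v : dotv u v <= normv u * normv v.
Proof.
have [u0|un0] := eqVneq (normv u) 0; first by rewrite (normv_eq0 u0) dotv0l normv0 mul0r.
have [v0|vn0] := eqVneq (normv v) 0; first by rewrite (normv_eq0 v0) dotv0r normv0 mulr0.
have nu_gt0 : 0 < normv u by rewrite lt_def un0 normv_ge0.
have nv_gt0 : 0 < normv v by rewrite lt_def vn0 normv_ge0.
have := dotvv_ge0 (normv v *: u - normv u *: v).
rewrite !(dotvBl, dotvBr, dotvZl, dotvZr) -!sqr_normv (dotvC v u) => H.
have : 0 <= 2 * (normv u * normv v) * (normv u * normv v - dotv u v) by nra.
by rewrite pmulr_rge0 ?subr_ge0 // mulr_gt0 // mulr_gt0.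
Qed.

Lemma cauchy_schwarz u v : `|dotv u v| <= normv u * normv v.
Proof. by rewrite ler_norml dotv_le andbT lerNl -dotvNl -(normvN u) dotv_le. Qed.

Lemma normvD_le u v : normv (u + v) <= normv u + normv v.
Proof.
rewrite -(@ler_pXn2r _ 2) // ?nnegrE ?addr_ge0 ?normv_ge0 //.
rewrite sqr_normv !(dotvDl, dotvDr) sqrrD -!sqr_normv (dotvC v u).
by have := dotv_le u v; lra.
Qed.

Lemma normvB_triangle u v w : normv (u - w) <= normv (u - v) + normv (v - w).
Proof. by have := normvD_le (u - v) (v - w); rewrite addrA subrK. Qed.

Lemma sqr_normvB u v :
  normv u ^+ 2 = normv v ^+ 2 + 2 * dotv v (u - v) + normv (u - v) ^+ 2.
Proof. by rewrite !sqr_normv !(dotvBl, dotvBr) (dotvC u v); ring. Qed.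

Lemma coord_le_normv u i : `|u ord0 i| <= normv u.
Proof.
rewrite -(@ler_pXn2r _ 2) // ?nnegrE ?normv_ge0 //.
rewrite sqr_normv real_normK ?num_real // /dotv (bigD1 i) //= expr2 lerDl.
by apply: sumr_ge0 => j _; rewrite -expr2 sqr_ge0.
Qed.

Lemma mx_norm_le_normv u : `|u| <= normv u.
Proof.
change (mx_norm u <= normv u); rewrite mx_normrE.
apply: bigmax_le => [|[i j] _]; first exact: normv_ge0.
by rewrite (ord1 i); exact: coord_le_normv.
Qed.

Lemma normv_le_mx_norm u : normv u <= d%:R * `|u|.
Proof.
rewrite -(@ler_pXn2r _ 2) // ?nnegrE ?normv_ge0 ?mulr_ge0 //.
have coord_le i : u ord0 i * u ord0 i <= `|u| ^+ 2.
  rewrite -expr2 -real_normK ?num_real // lerXn2r ?nnegrE //.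
  by rewrite [`|u|]mx_normrE (le_trans _ (le_bigmax _ _ (ord0, i))).
rewrite sqr_normv exprMn (le_trans (ler_sum _ (fun i _ => coord_le i))) //.
have d_le_sqr : d%:R <= d%:R ^+ 2 :> R.
  by case: d {u coord_le} => [|d']; rewrite ?expr0n // expr2 ler_peMl // ler1n.
rewrite sumr_const card_ord -[_ *+ d]mulr_natl.
by apply: ler_wpM2r; first exact: sqr_ge0.
Qed.

End Euclidean.

Section RowBlocks.
Context {R : realType} {n m : nat}.

Lemma dotv_row_mx (x x' : 'rV[R]_n) (y y' : 'rV[R]_m) :
  dotv (row_mx x y) (row_mx x' y') = dotv x x' + dotv y y'.
Proof.
rewrite /dotv big_split_ord /=; congr (_ + _); apply: eq_bigr => i _;
by rewrite ?row_mxEl ?row_mxEr.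
Qed.

Lemma dotv_hsubmx (a b : 'rV[R]_(n + m)) :
  dotv a b = dotv (lsubmx a) (lsubmx b) + dotv (rsubmx a) (rsubmx b).
Proof. by rewrite -{1}(hsubmxK a) -{1}(hsubmxK b) dotv_row_mx. Qed.

Lemma sqr_normv_row_mx (x : 'rV[R]_n) (y : 'rV[R]_m) :
  normv (row_mx x y) ^+ 2 = normv x ^+ 2 + normv y ^+ 2.
Proof. by rewrite !sqr_normv dotv_row_mx. Qed.

Lemma normv_row_mx_le (x : 'rV[R]_n) (y : 'rV[R]_m) :
  normv (row_mx x y) <= normv x + normv y.
Proof.
rewrite -(@ler_pXn2r _ 2) // ?nnegrE ?addr_ge0 ?normv_ge0 //.
by rewrite sqr_normv_row_mx sqrrD; have := normv_ge0 x; have := normv_ge0 y; nra.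
Qed.

Lemma normv_lsubmx (z : 'rV[R]_(n + m)) : normv (lsubmx z) <= normv z.
Proof.
rewrite -(@ler_pXn2r _ 2) // ?nnegrE ?normv_ge0 //.
by rewrite -{2}(hsubmxK z) sqr_normv_row_mx lerDl sqr_ge0.
Qed.

Lemma normv_rsubmx (z : 'rV[R]_(n + m)) : normv (rsubmx z) <= normv z.
Proof.
rewrite -(@ler_pXn2r _ 2) // ?nnegrE ?normv_ge0 //.
by rewrite -{2}(hsubmxK z) sqr_normv_row_mx lerDr sqr_ge0.
Qed.

Lemma normv_lsubmxB (z z' : 'rV[R]_(n + m)) :
  normv (lsubmx z - lsubmx z') <= normv (z - z').
Proof. by rewrite -linearB normv_lsubmx. Qed.

Lemma normv_rsubmxB (z z' : 'rV[R]_(n + m)) :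
  normv (rsubmx z - rsubmx z') <= normv (z - z').
Proof. by rewrite -linearB normv_rsubmx. Qed.

Lemma uncurryv_row_mx (T : Type) (F : 'rV[R]_n -> 'rV[R]_m -> T) x y :
  uncurryv F (row_mx x y) = F x y.
Proof. by rewrite /uncurryv row_mxKl row_mxKr. Qed.

End RowBlocks.

Section Sequences.
Context {R : realType}.

Lemma cvgrE (u : nat -> R) a : cvgr u a <-> u @ \oo --> a.
Proof.
rewrite cvgrPdist_lt; split=> cvg_u e /cvg_u.
  by move=> [N HN]; exists N => // k /HN; rewrite distrC.
by move=> [N _ HN]; exists N => k /HN /=; rewrite distrC.
Qed.

Lemma cvgr_subseq (u : nat -> R) (phi : nat -> nat) a :
  (forall j, (j <= phi j)%N) -> cvgr u a -> cvgr (u \o phi) a.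
Proof.
by move=> phi_ge cvg_u e /cvg_u[N HN]; exists N => k Nk; apply/HN/(leq_trans Nk).
Qed.

Lemma cvgr_squeeze0 (u w : nat -> R) :
  (forall k, 0 <= u k <= w k) -> cvgr w 0 -> cvgr u 0.
Proof.
move=> uw cvg_w e /cvg_w[N HN]; exists N => k /HN; rewrite !subr0.
by have /andP[u0 uwk] := uw k; rewrite !ger0_norm ?(le_trans u0) //; lra.
Qed.

Lemma cvgr_unique (u : nat -> R) a b : cvgr u a -> cvgr u b -> a = b.
Proof. by move=> /cvgrE ua /cvgrE ub; exact: cvg_unique ua ub. Qed.

Lemma cvgr_shiftS (u : nat -> R) a : cvgr (fun k => u k.+1) a -> cvgr u a.
Proof. by move=> u_cvg; apply/cvgrE; rewrite -cvg_shiftS; apply/cvgrE. Qed.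

Lemma nonincreasing_gap_cvg (u w : nat -> R) :
  has_lbound (range u) -> (forall k, 0 <= w k) -> (forall k, u k.+1 + w k <= u k) ->
  cvgr u (inf (range u)) /\ cvgr w 0.
Proof.
move=> u_lb w_ge0 u_gap.
have u_cvg : cvgr u (inf (range u)).
  apply/cvgrE/nonincreasing_cvgn => //; apply/nonincreasing_seqP => k.
  by have := u_gap k; have := w_ge0 k; lra.
split=> //; apply: (@cvgr_squeeze0 _ (fun k => u k - u k.+1)) => [k|].
  by rewrite w_ge0 /=; have := u_gap k; lra.
apply/cvgrE; rewrite -(subrr (inf (range u))); apply: cvgB; first exact/cvgrE.
by rewrite cvg_shiftS; apply/cvgrE.
Qed.

Lemma cvgr_sqr_le0 (a w : nat -> R) (c : R) : 0 < c -> (forall k, 0 <= a k) ->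
  (forall k, c * a k ^+ 2 <= w k) -> cvgr w 0 -> cvgr a 0.
Proof.
move=> c0 a_ge0 aw cvg_w e e0.
have [N HN] := cvg_w _ (mulr_gt0 c0 (exprn_gt0 2 e0)); exists N => k /HN.
rewrite !subr0 (ger0_norm (a_ge0 k)) => wk.
rewrite -(ltr_pXn2r (n := 2)) ?nnegrE ?a_ge0 ?ltW //.
by rewrite -(ltr_pM2l c0) (le_lt_trans (aw k)) // (le_lt_trans (ler_norm _)).
Qed.

Lemma inv_succ_lt_eventually (e : R) : 0 < e ->
  exists N : nat, forall k, (N <= k)%N -> k.+1%:R^-1 < e.
Proof.
move=> e0; exists (Num.trunc e^-1) => k Nk.
by rewrite invf_plt ?posrE // (lt_le_trans (truncnS_gt _)) // ler_nat.
Qed.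

Lemma cvgr_near (u w : nat -> R) a :
  (forall k, `|u k - w k| < k.+1%:R^-1) -> cvgr w a -> cvgr u a.
Proof.
move=> uw cvg_w e e0; have e20 : 0 < e / 2 by rewrite divr_gt0.
have [N1 H1] := cvg_w _ e20; have [N2 H2] := inv_succ_lt_eventually e20.
exists (maxn N1 N2) => k; rewrite geq_max => /andP[/H1 wk /H2].
have := uw k; have := ler_distD (w k) (u k) a.
by rewrite distrC; move: (k.+1%:R^-1 : R) => t; lra.
Qed.

Context {d : nat}.
Implicit Types (u w : nat -> 'rV[R]_d) (a b : 'rV[R]_d).

Lemma cvgv_cst a : cvgv (fun=> a) a.
Proof. by move=> e e0; exists 0%N => k _; rewrite subrr normv0. Qed.

Lemma cvgv_normv0 u : cvgr (fun k => normv (u k)) 0 -> cvgv u 0.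
Proof.
by move=> cvg_u e /cvg_u[N HN]; exists N => k /HN; rewrite !subr0 ger0_norm ?normv_ge0.
Qed.

Lemma cvgv_subseq u (phi : nat -> nat) a :
  (forall j, (j <= phi j)%N) -> cvgv u a -> cvgv (u \o phi) a.
Proof.
by move=> phi_ge cvg_u e /cvg_u[N HN]; exists N => k Nk; apply/HN/(leq_trans Nk).
Qed.

Lemma cvgvD u w a b : cvgv u a -> cvgv w b -> cvgv (fun k => u k + w k) (a + b).
Proof.
move=> cvg_u cvg_w e e0.
have e20 : 0 < e / 2 by rewrite divr_gt0.
have [N1 H1] := cvg_u _ e20; have [N2 H2] := cvg_w _ e20.
exists (maxn N1 N2) => k; rewrite geq_max => /andP[/H1 uk /H2 wk].
rewrite opprD addrACA (le_lt_trans (normvD_le _ _)) //; lra.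
Qed.

Lemma cvgv_comp p (G : 'rV[R]_d -> 'rV[R]_p) u a :
  contv G -> cvgv u a -> cvgv (G \o u) (G a).
Proof.
move=> G_cont cvg_u e /(G_cont a)[del del0 Hdel].
by have [N HN] := cvg_u del del0; exists N => k /HN /Hdel.
Qed.

Lemma cvgr_comp (F : 'rV[R]_d -> R) u a :
  (forall e, 0 < e -> exists2 del, 0 < del &
     forall y, normv (y - a) < del -> `|F y - F a| < e) ->
  cvgv u a -> cvgr (F \o u) (F a).
Proof.
move=> F_cont cvg_u e /F_cont[del del0 Hdel].
by have [N HN] := cvg_u del del0; exists N => k /HN /Hdel.
Qed.

Lemma cvgv_near u w a :
  (forall k, normv (u k - w k) < k.+1%:R^-1) -> cvgv w a -> cvgv u a.
Proof.
move=> uw cvg_w e e0; have e20 : 0 < e / 2 by rewrite divr_gt0.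
have [N1 H1] := cvg_w _ e20; have [N2 H2] := inv_succ_lt_eventually e20.
exists (maxn N1 N2) => k; rewrite geq_max => /andP[/H1 wk /H2].
have := uw k; have := normvB_triangle (u k) (w k) a.
by move: (k.+1%:R^-1 : R) => t; lra.
Qed.

End Sequences.

Section ClusterPoints.
Context {R : realType} {d : nat}.
Implicit Types (u : nat -> 'rV[R]_d) (p : 'rV[R]_d).

Lemma nbhs_normv p (e : R) : 0 < e -> nbhs p [set v | normv (v - p) < e].
Proof.
move=> e0; have d1_gt0 : 0 < d%:R + 1 :> R by rewrite ltr_pwDr.
apply/nbhs_ballP; exists (e / (d%:R + 1)); first by rewrite /= divr_gt0.
move=> v; rewrite -ball_normE /= ltr_pdivlMr // => pv.
have := normv_le_mx_norm (v - p); rewrite -normrN opprB.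
by have := normr_ge0 (p - v); nra.
Qed.

Lemma nbhs_normvP p (A : set 'rV[R]_d) :
  nbhs p A -> exists2 e : R, 0 < e & forall v, normv (v - p) < e -> A v.
Proof.
move=> /nbhs_ballP[e e0 pA]; exists e => // v pv; apply: pA.
by rewrite -ball_normE /= -normrN opprB (le_lt_trans (mx_norm_le_normv _)).
Qed.

Lemma increasing_ge_id (phi : nat -> nat) :
  (forall j, (phi j < phi j.+1)%N) -> forall j, (j <= phi j)%N.
Proof. by move=> phiS; elim=> // j IHj; apply: leq_ltn_trans IHj (phiS j). Qed.

Lemma cluster_pointsP u p : cluster_points u p <->
  (forall e : R, 0 < e -> forall N, exists2 k, (N <= k)%N & normv (u k - p) < e).
Proof.
split=> [[phi [phiS cvg_phi]] e e0 N|near_p].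
  have [M HM] := cvg_phi e e0; exists (phi (maxn N M)); last exact/HM/leq_maxr.
  exact: leq_trans (leq_maxl N M) (increasing_ge_id phiS _).
have [G HG] : {G : nat * nat -> nat & forall jN,
    (jN.2 <= G jN)%N /\ normv (u (G jN) - p) < jN.1.+1%:R^-1}.
  apply: (@choice _ _ (fun jN k => (jN.2 <= k)%N /\ normv (u k - p) < jN.1.+1%:R^-1)).
  move=> -[j N]; have j_gt0 : 0 < j.+1%:R^-1 :> R by rewrite invr_gt0.
  by have [k] := near_p _ j_gt0 N; exists k.
pose phi := fix phi j := if j is j'.+1 then G (j, (phi j').+1) else G (0, 0)%N.
have phi_near j : normv (u (phi j) - p) < j.+1%:R^-1.
  by case: j => [|j]; [case: (HG (0, 0)%N) | case: (HG (j.+1, (phi j).+1))].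
exists phi; split=> [j|]; first by case: (HG (j.+1, (phi j).+1)).
by apply: (cvgv_near phi_near); apply: cvgv_cst.
Qed.

Lemma cluster_points_succ u p : cluster_points u p ->
  exists psi : nat -> nat, (forall j, (j <= psi j)%N) /\ cvgv (fun j => u (psi j).+1) p.
Proof.
move=> [phi [phiS cvg_phi]]; exists (fun j => (phi j.+1).-1); split=> [j|e e0].
  by have := increasing_ge_id phiS j.+1; case: (phi j.+1).
have [N HN] := cvg_phi e e0; exists N => k Nk.
by rewrite prednK ?(leq_ltn_trans _ (phiS k)) //; apply/HN/leqW.
Qed.

Lemma cluster_points_closed u : closed (cluster_points u).
Proof.
move=> p p_cl; apply/cluster_pointsP => e e0 N.
have e20 : 0 < e / 2 by rewrite divr_gt0.
have [c [/cluster_pointsP c_cl /= pc]] := p_cl _ (nbhs_normv p e20).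
have [k Nk ck] := c_cl _ e20 N; exists k => //.
by have := normvB_triangle (u k) c p; lra.
Qed.

Lemma cluster_points_sub u (A : set 'rV[R]_d) :
  closed A -> (forall k, A (u k.+1)) -> cluster_points u `<=` A.
Proof.
move=> A_closed uA p /cluster_pointsP p_cl; apply: A_closed => B /nbhs_normvP[e e0 pB].
by have [[|k] // _ ukp] := p_cl e e0 1%N; exists (u k.+1); split; [apply: uA | apply: pB].
Qed.

Lemma normv_cluster_point_le u p (B : R) :
  (forall k, normv (u k) <= B) -> cluster_points u p -> normv p <= B.
Proof.
move=> uB /cluster_pointsP p_cl; apply/ler_addgt0Pr => e e0.
have [k _ ukp] := p_cl e e0 0%N.
by have := normvB_triangle p (u k) 0; have := uB k; rewrite !subr0 normvBC; lra.
Qed.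

Lemma cluster_points_nonempty u (B : R) :
  (forall k, normv (u k) <= B) -> cluster_points u !=set0.
Proof.
move=> uB; pose K := closed_ball (0 : 'rV[R]_d) (B + 1).
have B1 : 0 < B + 1 by have := le_trans (normv_ge0 _) (uB 0%N); lra.
have K_compact : compact K.
  apply: bounded_closed_compact; last exact: closed_ball_closed.
  exists (B + 1); split; first exact: num_real.
  move=> r Br v; rewrite /K closed_ballE // /closed_ball_ /= sub0r normrN.
  by move=> /le_trans; apply; exact: ltW.
have uK : (u @ \oo) K.
  exists 0%N => // k _; rewrite /K closed_ballE // /closed_ball_ /= sub0r normrN.
  by rewrite (le_trans (mx_norm_le_normv _)) // (le_trans (uB k)) // lerDl.
have [p [_ p_cl]] := K_compact _ _ uK; exists p; apply/cluster_pointsP => e e0 N.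
have [_ [[k /= Nk <-] ukp]] := p_cl [set u k | k in [set k | (N <= k)%N]] _
  (ex_intro2 _ _ N I (fun k Nk => ex_intro2 _ _ k Nk erefl)) (nbhs_normv p e0).
by exists k.
Qed.

Lemma cluster_points_compact u (B : R) :
  (forall k, normv (u k) <= B) -> compact (cluster_points u).
Proof.
move=> uB; apply: bounded_closed_compact; last exact: cluster_points_closed.
exists B; split=> [|r Br p /(normv_cluster_point_le uB) pB]; first exact: num_real.
by apply: le_trans (mx_norm_le_normv _) _; apply: le_trans pB _; exact: ltW.
Qed.

Lemma distv_le (z : 'rV[R]_d) (S : set 'rV[R]_d) s : S s -> distv z S <= normv (z - s).
Proof.
move=> Ss; apply: inf_lbound; last by exists s.
by exists 0 => _ [s' _ <-]; exact: normv_ge0.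
Qed.

Lemma distv_ge0 (z : 'rV[R]_d) (S : set 'rV[R]_d) : S !=set0 -> 0 <= distv z S.
Proof.
move=> [s Ss]; apply: lb_le_inf; first by exists (normv (z - s)), s.
by move=> _ [s' _ <-]; exact: normv_ge0.
Qed.

Lemma cvgr_distv_cluster_points u (B : R) : (forall k, normv (u k) <= B) ->
  cvgr (fun k => distv (u k) (cluster_points u)) 0.
Proof.
move=> uB e e0; apply: contrapT => not_cvg.
(* Otherwise a subsequence stays e-far from the cluster set, which contains the
   cluster points of that subsequence. *)
have far N : exists k, (N <= k)%N /\ e <= distv (u k) (cluster_points u).
  apply: contrapT => near_N; apply: not_cvg; exists N => k Nk.
  rewrite subr0 ger0_norm ?(distv_ge0 _ (cluster_points_nonempty uB)) // ltNge.
  by apply/negP => far_k; apply: near_N; exists k.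
have [G HG] := choice far.
have [p /cluster_pointsP p_cl] := cluster_points_nonempty (fun j => uB (G j)).
have [j _ ujp] := p_cl e e0 0%N.
have /(distv_le (u (G j))) : cluster_points u p.
  apply/cluster_pointsP => e' e'0 N; have [i Ni uip] := p_cl e' e'0 N.
  by exists (G i) => //; case: (HG i) => /(leq_trans Ni).
by case: (HG j) => _; lra.
Qed.

Lemma normv_le_max_succ u (r : R) :
  (forall k, normv (u k.+1) <= r) -> forall k, normv (u k) <= Num.max r (normv (u 0%N)).
Proof. by move=> ur [|k]; rewrite le_max ?lexx ?ur ?orbT. Qed.

End ClusterPoints.

Section Gradients.
Context {R : realType} {d : nat}.
Implicit Types (F H : 'rV[R]_d -> R) (G K : 'rV[R]_d -> 'rV[R]_d).

Lemma has_gradD F G H K : has_grad F G -> has_grad H K ->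
  has_grad (fun x => F x + H x) (fun x => G x + K x).
Proof.
move=> FG HK x e e0; have e20 : 0 < e / 2 by rewrite divr_gt0.
have [del1 del10 H1] := FG x _ e20; have [del2 del20 H2] := HK x _ e20.
exists (Num.min del1 del2) => [|y]; first by rewrite lt_min del10.
rewrite lt_min => /andP[/H1 Fy /H2 Hy]; rewrite dotvDl.
rewrite (_ : _ - _ = (F y - F x - dotv (G x) (y - x)) + (H y - H x - dotv (K x) (y - x))).
  by rewrite (le_trans (ler_normD _ _)) //; lra.
by ring.
Qed.

Lemma has_gradZ a F G : has_grad F G -> has_grad (fun x => a * F x) (fun x => a *: G x).
Proof.
move=> FG x e e0; have a1 : 0 < `|a| + 1 by rewrite ltr_wpDl.
have [del del0 Hdel] := FG x _ (divr_gt0 e0 a1); exists del => // y /Hdel Fy.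
rewrite dotvZl -!mulrBr normrM (le_trans (ler_wpM2l (normr_ge0 a) Fy)) //.
rewrite mulrA ler_wpM2r ?normv_ge0 // mulrCA ger_pMr // ler_pdivrMr // mul1r.
by rewrite lerDl.
Qed.

Lemma has_gradB F G H K : has_grad F G -> has_grad H K ->
  has_grad (fun x => F x - H x) (fun x => G x - K x).
Proof.
move=> FG HK; rewrite -(funext (fun x => congr1 (+%R (F x)) (mulN1r (H x)))).
rewrite -(funext (fun x => congr1 (+%R (G x)) (scaleN1r (K x)))).
exact: has_gradD FG (has_gradZ _ HK).
Qed.

Lemma has_grad_cst (c : R) : has_grad (fun _ : 'rV[R]_d => c) (fun=> 0).
Proof.
by move=> x e e0; exists 1 => // y _; rewrite dotv0l !subrr normr0 mulr_ge0 ?normv_ge0 ?ltW.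
Qed.

Lemma has_grad_dotv (a : 'rV[R]_d) : has_grad (dotv a) (fun=> a).
Proof.
by move=> x e e0; exists 1 => // y _; rewrite -dotvBr subrr normr0 mulr_ge0 ?normv_ge0 ?ltW.
Qed.

Lemma has_grad_sqr_normv : has_grad (fun x : 'rV[R]_d => normv x ^+ 2) (fun x => 2 *: x).
Proof.
move=> x e e0; exists e => // y yx.
rewrite (sqr_normvB y x) dotvZl (_ : _ - _ = normv (y - x) ^+ 2); last by ring.
by rewrite ger0_norm ?sqr_ge0 // expr2 ler_wpM2r ?normv_ge0 // ltW.
Qed.

Lemma bregmanxx (phi : 'rV[R]_d -> R) dphi x : bregman phi dphi x x = 0.
Proof. by rewrite /bregman !subrr dotv0r subrr. Qed.

Lemma has_grad_bregman (phi : 'rV[R]_d -> R) dphi y : has_grad phi dphi ->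
  has_grad (fun x => bregman phi dphi x y) (fun x => dphi x - dphi y).
Proof.
move=> phi_grad.
have -> : (fun x => bregman phi dphi x y) =
    (fun x => phi x - dotv (dphi y) x + (dotv (dphi y) y - phi y)).
  by apply/funext => x; rewrite /bregman dotvBr; ring.
rewrite -(funext (fun x => addr0 (dphi x - dphi y))).
exact: has_gradD (has_gradB phi_grad (has_grad_dotv _)) (has_grad_cst _).
Qed.

Lemma has_grad_cont F G : has_grad F G -> forall x e, 0 < e -> exists2 del, 0 < del &
  forall y, normv (y - x) < del -> `|F y - F x| < e.
Proof.
move=> FG x e e0; have [del1 del10 H1] := FG x 1 ltr01.
have Gx1 : 0 < normv (G x) + 1 by rewrite ltr_wpDl ?normv_ge0.
exists (Num.min del1 (e / (normv (G x) + 1))) => [|y]; first by rewrite lt_min del10 divr_gt0.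
rewrite lt_min ltr_pdivlMr // => /andP[/H1 Fy yx].
have := cauchy_schwarz (G x) (y - x); have := normv_ge0 (y - x); have := normv_ge0 (G x).
have := ler_distD (dotv (G x) (y - x)) (F y - F x) 0; rewrite !subr0.
by move: Fy; rewrite mul1r; nra.
Qed.

End Gradients.

Section SeparableGradients.
Context {R : realType} {n m : nat}.
Variables (f : 'rV[R]_n -> R) (gradf : 'rV[R]_n -> 'rV[R]_n).
Variables (g : 'rV[R]_m -> R) (gradg : 'rV[R]_m -> 'rV[R]_m).

Lemma has_grad_split : has_grad f gradf -> has_grad g gradg ->
  has_grad (fun z : 'rV[R]_(n + m) => f (lsubmx z) + g (rsubmx z))
           (fun z => row_mx (gradf (lsubmx z)) (gradg (rsubmx z))).
Proof.
move=> f_grad g_grad z e e0; have e20 : 0 < e / 2 by rewrite divr_gt0.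
have [del1 del10 H1] := f_grad (lsubmx z) _ e20.
have [del2 del20 H2] := g_grad (rsubmx z) _ e20.
exists (Num.min del1 del2) => [|w]; first by rewrite lt_min del10.
rewrite lt_min => /andP[wz1 wz2].
have := H1 _ (le_lt_trans (normv_lsubmxB w z) wz1).
have := H2 _ (le_lt_trans (normv_rsubmxB w z) wz2).
rewrite dotv_hsubmx row_mxKl row_mxKr !linearB /=.
have := normv_lsubmx (w - z); have := normv_rsubmx (w - z); rewrite !linearB /=.
set A := f _ - _ - _; set B := g _ - _ - _ => lz rz hB hA.
have -> : f (lsubmx w) + g (rsubmx w) - (f (lsubmx z) + g (rsubmx z))
    - (dotv (gradf (lsubmx z)) (lsubmx w - lsubmx z)
       + dotv (gradg (rsubmx z)) (rsubmx w - rsubmx z)) = A + B by rewrite /A /B; ring.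
by rewrite (le_trans (ler_normD _ _)) //; nra.
Qed.

Lemma contv_split : contv gradf -> contv gradg ->
  contv (fun z : 'rV[R]_(n + m) => row_mx (gradf (lsubmx z)) (gradg (rsubmx z))).
Proof.
move=> f_cont g_cont z e e0; have e20 : 0 < e / 2 by rewrite divr_gt0.
have [del1 del10 H1] := f_cont (lsubmx z) _ e20.
have [del2 del20 H2] := g_cont (rsubmx z) _ e20.
exists (Num.min del1 del2) => [|w]; first by rewrite lt_min del10.
rewrite lt_min => /andP[wz1 wz2].
have := H1 _ (le_lt_trans (normv_lsubmxB w z) wz1).
have := H2 _ (le_lt_trans (normv_rsubmxB w z) wz2).
rewrite opp_row_mx add_row_mx; have := normv_row_mx_le (gradf (lsubmx w) - gradf (lsubmx z))
  (gradg (rsubmx w) - gradg (rsubmx z)); lra.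
Qed.

End SeparableGradients.

Section RealLine.
Context {R : realType}.

Lemma locally_nonincreasing_le (P : R -> R) a b : a <= b ->
  (forall s, a <= s <= b -> exists2 del, 0 < del & forall t, `|t - s| < del ->
     (s <= t -> P t <= P s) /\ (t <= s -> P s <= P t)) ->
  P b <= P a.
Proof.
move=> ab P_loc; pose S := [set t | a <= t <= b /\ P t <= P a].
have Sa : S a by split; rewrite ?lexx ?ab.
have S_sup : has_sup S by split; [exists a | exists b => t [/andP[]]].
pose s := sup S.
have a_s : a <= s by apply: sup_upper_bound.
have s_b : s <= b by apply: ge_sup => [|t [/andP[]]//]; exists a.
have [del del0 Hdel] := P_loc s (introT andP (conj a_s s_b)).
have Ss : S s.
  have [t tS st] := sup_adherent del0 S_sup.
  have ts : t <= s by apply: sup_upper_bound.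
  case: tS => /andP[a_t t_b] Pt.
  have [_ /(_ ts) Pst] : (s <= t -> P t <= P s) /\ (t <= s -> P s <= P t).
    by apply: Hdel; rewrite ler0_norm ?subr_le0 // opprB; rewrite -/s in st; lra.
  by split; [rewrite a_s s_b | apply: le_trans Pst Pt].
have [<-|sb] := eqVneq s b; first by case: Ss.
have del20 : 0 < del / 2 by rewrite divr_gt0.
have s_lt_b : s < b by rewrite lt_neqAle sb s_b.
pose t := Num.min (s + del / 2) b.
have st : s < t by rewrite /t lt_min s_lt_b andbT; lra.
have t_b : t <= b by rewrite /t ge_min lexx orbT.
have t_sdel : t <= s + del / 2 by rewrite /t ge_min lexx.
have [Pts _] : (s <= t -> P t <= P s) /\ (t <= s -> P s <= P t).
  by apply: Hdel; rewrite gtr0_norm ?subr_gt0 //; lra.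
have St : S t by split; [apply/andP; split; lra | apply: le_trans (Pts (ltW st)) Ss.2].
by have := sup_upper_bound S_sup St; rewrite -/s leNgt st.
Qed.

Lemma descent_1d (phi dphi : R -> R) (K : R) :
  (forall s, 0 <= s <= 1 -> forall e, 0 < e -> exists2 del, 0 < del &
     forall t, `|t - s| < del -> `|phi t - phi s - (t - s) * dphi s| <= e * `|t - s|) ->
  (forall s, 0 <= s <= 1 -> dphi s <= dphi 0 + K * s) ->
  phi 1 <= phi 0 + dphi 0 + K / 2.
Proof.
move=> phi_deriv dphi_le; apply/ler_addgt0Pr => eps eps0.
pose P t := phi t - t * dphi 0 - K / 2 * t ^+ 2 - eps * t.
suff : P 1 <= P 0 by rewrite /P !mul0r !mul1r expr0n expr1n /=; lra.
apply: (@locally_nonincreasing_le P 0 1 ler01) => s s01.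
have eps20 : 0 < eps / 2 by rewrite divr_gt0.
have K1 : 0 < `|K| + 1 by rewrite ltr_wpDl.
have [del del0 Hdel] := phi_deriv s s01 _ eps20.
exists (Num.min del (eps / (`|K| + 1))) => [|t]; first by rewrite lt_min del0 divr_gt0.
rewrite lt_min ltr_pdivlMr // => /andP[/Hdel taylor ts_small].
have Kts : `|K| * `|t - s| <= eps by have := normr_ge0 (t - s); nra.
have slope : dphi s - dphi 0 - K * s <= 0 by rewrite subr_le0 lerBlDr addrC dphi_le.
have Kts_sqr : `|K| * (t - s) ^+ 2 <= eps * `|t - s|.
  by rewrite -real_normK ?num_real // expr2 mulrA ler_wpM2r.
have KK := ler_wpM2r (sqr_ge0 (t - s)) (ler_norm K).
have KN := ler_wpM2r (sqr_ge0 (t - s)) (lerNnormlW (lexx `|K|)).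
have -> : P t = P s + (phi t - phi s - (t - s) * dphi s)
    + (t - s) * (dphi s - dphi 0 - K * s) - K / 2 * (t - s) ^+ 2 - eps * (t - s).
  by rewrite /P; field.
move: taylor; rewrite ler_norml => /andP[taylor_l taylor_r].
split; rewrite -subr_ge0 => ts; have := mulr_ge0_le0 ts slope.
  by rewrite ger0_norm // in taylor_l taylor_r Kts_sqr; lra.
by rewrite distrC ger0_norm // in taylor_l taylor_r Kts_sqr; lra.
Qed.

Lemma le_div_succ_mul (e a : R) : 0 <= e -> 0 <= a -> e / (a + 1) * a <= e.
Proof.
move=> e0 a0; rewrite mulrAC -mulrA ler_piMr // ler_pdivrMr ?ltr_wpDl //.
by rewrite mul1r lerDl.
Qed.

End RealLine.

Section DescentAndConvexity.
Context {R : realType} {d : nat}.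
Implicit Types (F : 'rV[R]_d -> R) (G : 'rV[R]_d -> 'rV[R]_d).

Lemma descent_lemma F G c : has_grad F G -> lipschitzv G c ->
  forall x y, F x <= F y + dotv (G y) (x - y) + c / 2 * normv (x - y) ^+ 2.
Proof.
move=> FG G_lip x y; set u := x - y; set nu := normv u.
have nu1 : 0 < nu + 1 by rewrite ltr_wpDl ?normv_ge0.
have := @descent_1d R (fun t => F (y + t *: u)) (fun t => dotv (G (y + t *: u)) u)
  (c * nu ^+ 2).
rewrite scale0r scale1r addr0 subrKC mulrAC; apply=> [s _ e e0|s /andP[s0 _]].
  have [del del0 Hdel] := FG (y + s *: u) _ (divr_gt0 e0 nu1).
  exists (del / (nu + 1)) => [|t]; first by rewrite divr_gt0.
  have yts : y + t *: u - (y + s *: u) = (t - s) *: u.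
    by rewrite [y + t *: u]addrC addrKA scalerBl.
  rewrite ltr_pdivlMr // => ts; have := Hdel (y + t *: u); rewrite yts normvZ dotvZr.
  rewrite -/nu => /(_ _)/le_trans; apply; first by have := normr_ge0 (t - s); nra.
  rewrite mulrCA [e * _]mulrC ler_wpM2l ?normr_ge0 //.
  exact: le_div_succ_mul (ltW e0) (normv_ge0 _).
rewrite -lerBlDl -dotvBl (le_trans (dotv_le _ _)) //.
rewrite (le_trans (ler_wpM2r (normv_ge0 _) (G_lip _ _))) //.
by rewrite addrAC subrr add0r normvZ ger0_norm // -/nu; lra.
Qed.

Lemma bregman_convex_ge0 F G : convexv F -> has_grad F G ->
  forall x y, 0 <= bregman F G x y.
Proof.
move=> F_cvx FG x y; rewrite /bregman; set u := x - y; set nu := normv u.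
have nu1 : 0 < nu + 1 by rewrite ltr_wpDl ?normv_ge0.
apply/ler_addgt0Pr => eps eps0.
have [del del0 Hdel] := FG y _ (divr_gt0 eps0 nu1).
pose t := Num.min 1 (del / (nu + 1)).
have t0 : 0 < t by rewrite lt_min ltr01 divr_gt0.
have t1 : t <= 1 by rewrite ge_min lexx.
have t_del : t * (nu + 1) <= del by rewrite -ler_pdivlMr // ge_min lexx orbT.
have yt : t *: x + (1 - t) *: y = y + t *: u.
  by apply/rowP => i; rewrite !mxE; ring.
have := F_cvx x y t; rewrite t1 ltW //= yt => /(_ isT) cvx.
have := Hdel (y + t *: u); rewrite addrC addKr normvZ gtr0_norm // dotvZr -/nu.
move=> /(_ _)/lerNnormlW taylor.
have /taylor {}taylor : t * nu < del by nra.
have : t * (dotv (G y) u - eps / (nu + 1) * nu - (F x - F y)) <= 0 by nra.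
rewrite pmulr_rle0 // => key.
by have := le_div_succ_mul (ltW eps0) (normv_ge0 u); rewrite -/nu; lra.
Qed.

Lemma bregman_strongly_convex_ge (phi : 'rV[R]_d -> R) dphi (theta : R) :
  has_grad phi dphi -> strongly_convex phi theta ->
  forall x y, theta / 2 * normv (x - y) ^+ 2 <= bregman phi dphi x y.
Proof.
move=> phi_grad phi_sc x y.
have psi_grad : has_grad (fun x => phi x - theta / 2 * normv x ^+ 2)
                         (fun x => dphi x - theta / 2 *: (2 *: x)).
  exact: has_gradB phi_grad (has_gradZ _ has_grad_sqr_normv).
have := bregman_convex_ge0 phi_sc psi_grad x y.
rewrite /bregman (sqr_normvB x y) dotvBl !dotvZl; lra.
Qed.

End DescentAndConvexity.

Section ExtendedReals.
Context {R : realType}.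

Lemma ltey_DEFin (X : \bar R) (r : R) : (X + r%:E < +oo)%E = (X < +oo)%E.
Proof. by case: X => [s| |] //=; rewrite -?EFinD ?ltry. Qed.

Lemma lee_fineD (X : \bar R) (a b : R) : X != -oo%E -> (X + a%:E <= b%:E)%E ->
  X = (fine X)%:E /\ fine X + a <= b.
Proof. by case: X => [r| |] //= _; rewrite -?EFinD ?lee_fin // leNye. Qed.

End ExtendedReals.

Section Subdifferentials.
Context {R : realType} {d : nat}.
Implicit Types (F : 'rV[R]_d -> \bar R) (S : 'rV[R]_d -> R) (dS : 'rV[R]_d -> 'rV[R]_d).

Lemma frechet_sub_lim_sub F x v : frechet_sub F x v -> lim_sub F x v.
Proof.
move=> Fxv; split; first by case: Fxv.
exists (fun=> x), (fun=> v); split=> //; try exact: cvgv_cst.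
by apply/cvgrE; exact: cvg_cst.
Qed.

Lemma frechet_sub_min F x : F x \is a fin_num -> (forall y, (F x <= F y)%E) ->
  frechet_sub F x 0.
Proof.
move=> Fx_fin Fx_min; split=> // e e0; exists 1 => // y _.
rewrite dotv0l sub0r (le_trans _ (Fx_min y)) // geeDl // lee_fin oppr_le0.
by rewrite mulr_ge0 ?normv_ge0 ?ltW.
Qed.

Lemma frechet_subD F S dS x v : frechet_sub F x v -> has_grad S dS ->
  frechet_sub (fun z => F z + (S z)%:E)%E x (v + dS x).
Proof.
move=> [Fx_fin F_sub] S_grad; split; first by rewrite fin_numD Fx_fin.
move=> e e0; have e20 : 0 < e / 2 by rewrite divr_gt0.
have [del1 del10 H1] := F_sub _ e20; have [del2 del20 H2] := S_grad x _ e20.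
exists (Num.min del1 del2) => [|y]; first by rewrite lt_min del10.
rewrite lt_min => /andP[/H1 Fy /H2 /lerNnormlW Sy].
rewrite -addeA -EFinD (_ : S x + _ = dotv v (y - x) - e / 2 * normv (y - x)
    + (S x + dotv (dS x) (y - x) - e / 2 * normv (y - x))); last by rewrite dotvDl; field.
by rewrite EFinD addeA leeD // lee_fin; lra.
Qed.

Lemma frechet_sub_argmin F S dS x : F x \is a fin_num -> has_grad S dS ->
  (forall y, F x + (S x)%:E <= F y + (S y)%:E)%E -> frechet_sub F x (- dS x).
Proof.
move=> Fx_fin S_grad x_min.
have FS_fin : (F x + (S x)%:E)%E \is a fin_num by rewrite fin_numD Fx_fin.
have := frechet_subD (frechet_sub_min FS_fin x_min) (has_gradZ (-1) S_grad).
rewrite add0r scaleN1r; congr frechet_sub; apply/funext => y.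
by rewrite -addeA -EFinD mulN1r subrr adde0.
Qed.

Lemma lim_subD F S dS x v : lim_sub F x v -> has_grad S dS -> contv dS ->
  lim_sub (fun z => F z + (S z)%:E)%E x (v + dS x).
Proof.
move=> [Fx_fin [xs [vs [cvg_xs cvg_F F_sub cvg_vs]]]] S_grad dS_cont.
split; first by rewrite fin_numD Fx_fin.
exists xs, (fun k => vs k + dS (xs k)); split=> [||k|]; last 2 first.
- exact: frechet_subD.
- exact: cvgvD cvg_vs (cvgv_comp dS_cont cvg_xs).
- by [].
have -> : (fun k => fine (F (xs k) + (S (xs k))%:E)) = (fun k => fine (F (xs k)) + S (xs k)).
  by apply/funext => k; rewrite fineD //; case: (F_sub k).
rewrite fineD // cvgrE; apply: cvgD; apply/cvgrE => //.
exact: cvgr_comp (has_grad_cont S_grad x) cvg_xs.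
Qed.

Lemma lim_sub_closed F (xs vs : nat -> 'rV[R]_d) x v :
  F x \is a fin_num -> (forall k, lim_sub F (xs k) (vs k)) -> cvgv xs x ->
  cvgr (fun k => fine (F (xs k))) (fine (F x)) -> cvgv vs v -> lim_sub F x v.
Proof.
move=> Fx_fin F_sub cvg_xs cvg_F cvg_vs; split=> //.
have [G HG] : {G : nat -> 'rV[R]_d * 'rV[R]_d & forall k,
    [/\ frechet_sub F (G k).1 (G k).2, normv ((G k).1 - xs k) < k.+1%:R^-1,
        `|fine (F (G k).1) - fine (F (xs k))| < k.+1%:R^-1 &
        normv ((G k).2 - vs k) < k.+1%:R^-1]}.
  apply: (@choice _ _ (fun k xv =>
    [/\ frechet_sub F xv.1 xv.2, normv (xv.1 - xs k) < k.+1%:R^-1,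
        `|fine (F xv.1) - fine (F (xs k))| < k.+1%:R^-1 &
        normv (xv.2 - vs k) < k.+1%:R^-1])).
  move=> k; have [_ [ys [ws [cvg_ys cvg_Fy F_sub' cvg_ws]]]] := F_sub k.
  have k_gt0 : 0 < k.+1%:R^-1 :> R by rewrite invr_gt0.
  have [N1 H1] := cvg_ys _ k_gt0; have [N2 H2] := cvg_Fy _ k_gt0.
  have [N3 H3] := cvg_ws _ k_gt0; pose N := maxn N1 (maxn N2 N3).
  exists (ys N, ws N); split=> //=; [apply: H1 | apply: H2 | apply: H3];
    by rewrite ?leq_maxl // (leq_trans _ (leq_maxr _ _)) // ?leq_maxl ?leq_maxr.
exists (fun k => (G k).1), (fun k => (G k).2); split.
- by apply: cvgv_near cvg_xs => k; case: (HG k).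
- by apply: cvgr_near cvg_F => k; case: (HG k).
- by move=> k; case: (HG k).
- by apply: cvgv_near cvg_vs => k; case: (HG k).
Qed.

End Subdifferentials.

Section ContinuityOnDomain.
Context {R : realType} {d : nat}.
Implicit Types (F : 'rV[R]_d -> \bar R).

Definition cont_on_domain F : Prop :=
  forall x, (F x < +oo)%E -> forall e : R, 0 < e -> exists2 del : R, 0 < del &
    forall x', (F x' < +oo)%E -> normv (x' - x) < del -> `|fine (F x') - fine (F x)| < e.

Lemma cont_on_domainD F (S : 'rV[R]_d -> R) dS : (forall x, F x != -oo%E) ->
  cont_on_domain F -> has_grad S dS -> cont_on_domain (fun x => F x + (S x)%:E)%E.
Proof.
move=> F_proper F_cont S_grad x FSx e e0; have e20 : 0 < e / 2 by rewrite divr_gt0.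
have fin_F y : (F y < +oo)%E -> F y \is a fin_num by rewrite fin_numE F_proper ltey.
rewrite ltey_DEFin in FSx.
have [del1 del10 H1] := F_cont x FSx _ e20.
have [del2 del20 H2] := has_grad_cont S_grad x e20.
exists (Num.min del1 del2) => [|y]; first by rewrite lt_min del10.
rewrite ltey_DEFin lt_min => FSy /andP[/(H1 _ FSy) Fy /H2 Sy].
rewrite !fineD ?fin_F //=.
by have := ler_normD (fine (F y) - fine (F x)) (S y - S x); rewrite addrACA opprD; lra.
Qed.

Lemma cvgr_cont_on_domain F (u : nat -> 'rV[R]_d) a : cont_on_domain F ->
  (F a < +oo)%E -> (forall k, (F (u k) < +oo)%E) -> cvgv u a ->
  cvgr (fun k => fine (F (u k))) (fine (F a)).
Proof.
move=> F_cont Fa Fu cvg_u e /(F_cont a Fa)[del del0 Hdel].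
by have [N HN] := cvg_u del del0; exists N => k /HN; apply: Hdel.
Qed.

End ContinuityOnDomain.

Section BlockProximalGradient.
Context {R : realType} {n m : nat}.
Variables (f : 'rV[R]_n -> R) (gradf : 'rV[R]_n -> 'rV[R]_n).
Variables (g : 'rV[R]_m -> R) (gradg : 'rV[R]_m -> 'rV[R]_m).
Variable Q : 'rV[R]_n -> 'rV[R]_m -> \bar R.
Variables (q : 'rV[R]_n -> 'rV[R]_m -> R) (gradxq : 'rV[R]_n -> 'rV[R]_m -> 'rV[R]_n).
Variable h : 'rV[R]_n -> \bar R.
Variables (phi1 : 'rV[R]_n -> R) (dphi1 : 'rV[R]_n -> 'rV[R]_n).
Variables (phi2 : 'rV[R]_m -> R) (dphi2 : 'rV[R]_m -> 'rV[R]_m).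
Variables (Lf Lg theta1 theta2 eta1 eta2 : R).

Hypothesis HLbdd : exists c : R, forall x y, (c%:E <= Lobj f Q g x y)%E.
Hypothesis Hf : has_grad f gradf.
Hypothesis Hfc : contv gradf.
Hypothesis Hflip : lipschitzv gradf Lf.
Hypothesis Hg : has_grad g gradg.
Hypothesis Hgc : contv gradg.
Hypothesis Hglip : lipschitzv gradg Lg.
Hypothesis HQproper : proper_fun (uncurryv Q).
Hypothesis Hphi1 : has_grad phi1 dphi1.
Hypothesis Hphi2 : has_grad phi2 dphi2.
Hypothesis Hphi1sc : strongly_convex phi1 theta1.
Hypothesis Hphi2sc : strongly_convex phi2 theta2.
Hypothesis Htheta1 : Lf < theta1.
Hypothesis Htheta2 : Lg < theta2.
Hypothesis Hdphi1 : lipschitzv dphi1 eta1.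
Hypothesis Hdphi2 : lipschitzv dphi2 eta2.
Hypothesis Hcoer : forall M : R, exists r : R, forall z : 'rV[R]_(n + m),
  r < normv z -> (M%:E < uncurryv (Lobj f Q g) z)%E.
Hypothesis HdomQ : closed (domain (uncurryv Q)).
Hypothesis Hsub : forall (x : 'rV[R]_n) (y : 'rV[R]_m), (Q x y < +oo)%E ->
  forall v w, lim_sub (fun x' => Q x' y) x v -> lim_sub (fun y' => Q x y') y w ->
  lim_sub (uncurryv Q) (row_mx x y) (row_mx v w).
Hypothesis HQdec : forall x y, Q x y = ((q x y)%:E + h x)%E.
Hypothesis Hhcont : cont_on_domain h.
Hypothesis Hqcont : forall z : 'rV[R]_(n + m), (uncurryv Q z < +oo)%E ->
  forall e : R, 0 < e -> exists2 del : R, 0 < del &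
  forall z', (uncurryv Q z' < +oo)%E -> normv (z' - z) < del ->
    `|uncurryv q z' - uncurryv q z| < e.
Hypothesis Hq1 : forall y, has_grad (fun x => q x y) (fun x => gradxq x y).
Hypothesis Hqlip : forall (D1 : set 'rV[R]_n) (D2 : set 'rV[R]_m),
  boundedv [set row_mx x y | x in D1 & y in D2] ->
  (forall x y, D1 x -> D2 y -> (Q x y < +oo)%E) ->
  exists2 xi : R, 0 < xi & forall xb y yb, D1 xb -> D2 y -> D2 yb ->
    normv (gradxq xb y - gradxq xb yb) <= xi * normv (y - yb).

Local Notation L := (Lobj f Q g).

Lemma Q_neq_ninfty x y : Q x y != -oo%E.
Proof. by have := HQproper.1 (row_mx x y); rewrite uncurryv_row_mx. Qed.

Lemma h_neq_ninfty x : h x != -oo%E.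
Proof. by have := Q_neq_ninfty x 0; rewrite HQdec; case: (h x). Qed.

Lemma Q_lt_pinfty x y : (Q x y < +oo)%E = (h x < +oo)%E.
Proof.
by rewrite HQdec; have := h_neq_ninfty x; case: (h x) => [r| |] //= _; rewrite -EFinD !ltry.
Qed.

Lemma Q_shift x y y' : Q x y' = (Q x y + (q x y' - q x y)%:E)%E.
Proof.
rewrite !HQdec; have := h_neq_ninfty x; case: (h x) => [r| |] //= _.
by rewrite -!EFinD; congr EFin; ring.
Qed.

Lemma uncurryv_Lobj :
  uncurryv L = fun z => (uncurryv Q z + (f (lsubmx z) + g (rsubmx z))%:E)%E.
Proof.
apply/funext => z; rewrite /uncurryv /Lobj EFinD addeA.
by rewrite [((f _)%:E + _)%E]addeC.
Qed.

Definition x_step_min xa ya x1 := forall x' : 'rV[R]_n,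
  (Q x1 ya + (dotv (gradf xa) x1 + bregman phi1 dphi1 x1 xa)%:E
   <= Q x' ya + (dotv (gradf xa) x' + bregman phi1 dphi1 x' xa)%:E)%E.

Definition y_step_min ya x1 y1 := forall y' : 'rV[R]_m,
  (Q x1 y1 + (dotv (gradg ya) y1 + bregman phi2 dphi2 y1 ya)%:E
   <= Q x1 y' + (dotv (gradg ya) y' + bregman phi2 dphi2 y' ya)%:E)%E.

Lemma step_decrease xa ya x1 y1 : x_step_min xa ya x1 -> y_step_min ya x1 y1 ->
  (L x1 y1 + ((theta1 - Lf) / 2 * normv (x1 - xa) ^+ 2
              + (theta2 - Lg) / 2 * normv (y1 - ya) ^+ 2)%:E <= L xa ya)%E.
Proof.
move=> xmin ymin; rewrite /Lobj.
case Qa : (Q xa ya) => [r| |]; last by have := Q_neq_ninfty xa ya; rewrite Qa.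
  have := xmin xa; rewrite Qa bregmanxx -EFinD => /(lee_fineD (Q_neq_ninfty _ _)) [Q1 le1].
  have := ymin ya; rewrite Q1 bregmanxx -EFinD => /(lee_fineD (Q_neq_ninfty _ _)) [Q2 le2].
  rewrite Q2 -!EFinD lee_fin.
  have := descent_lemma Hf Hflip x1 xa; have := descent_lemma Hg Hglip y1 ya.
  have := bregman_strongly_convex_ge Hphi1 Hphi1sc x1 xa.
  have := bregman_strongly_convex_ge Hphi2 Hphi2sc y1 ya.
  by rewrite !dotvBr; lra.
by rewrite addeAC addye ?leey.
Qed.

Definition step_subgrad xa ya x1 y1 : 'rV[R]_(n + m) :=
  row_mx (gradf x1 - gradf xa + (dphi1 xa - dphi1 x1) + (gradxq x1 y1 - gradxq x1 ya))
         (gradg y1 - gradg ya + (dphi2 ya - dphi2 y1)).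

Lemma step_subgrad_lim_sub xa ya x1 y1 : (Q x1 y1 < +oo)%E ->
  x_step_min xa ya x1 -> y_step_min ya x1 y1 ->
  lim_sub (uncurryv L) (row_mx x1 y1) (step_subgrad xa ya x1 y1).
Proof.
move=> Q1_fin xmin ymin.
have Q1 : Q x1 y1 \is a fin_num by rewrite fin_numE Q_neq_ninfty -ltey.
(* Q (., ya) and Q (., y1) differ by the smooth q (., ya) - q (., y1), so x1 also
   minimizes Q (., y1) + Gx. *)
pose Gx x' := q x' ya - q x' y1 + (dotv (gradf xa) x' + bregman phi1 dphi1 x' xa).
have Gx_min x' : (Q x1 y1 + (Gx x1)%:E <= Q x' y1 + (Gx x')%:E)%E.
  rewrite /Gx [(q x1 ya - _ + _)%:E]EFinD [(q x' ya - _ + _)%:E]EFinD !addeA.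
  by rewrite -!Q_shift; exact: xmin.
have x_sub := frechet_sub_argmin (F := Q ^~ y1) Q1
  (has_gradD (has_gradB (Hq1 ya) (Hq1 y1))
             (has_gradD (has_grad_dotv _) (has_grad_bregman xa Hphi1))) Gx_min.
have y_sub := frechet_sub_argmin (F := Q x1) Q1
  (has_gradD (has_grad_dotv _) (has_grad_bregman ya Hphi2)) ymin.
have := lim_subD (Hsub Q1_fin (frechet_sub_lim_sub x_sub) (frechet_sub_lim_sub y_sub))
  (has_grad_split Hf Hg) (contv_split Hfc Hgc).
rewrite -uncurryv_Lobj row_mxKl row_mxKr add_row_mx.
rewrite [X in lim_sub _ _ X -> _](_ : _ = step_subgrad xa ya x1 y1) //.
by rewrite /step_subgrad; congr row_mx; apply/rowP => i; rewrite !mxE; ring.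
Qed.

Lemma normv_step_subgrad_le xa ya x1 y1 :
  normv (step_subgrad xa ya x1 y1) <= (Lf + eta1) * normv (x1 - xa)
    + (Lg + eta2) * normv (y1 - ya) + normv (gradxq x1 y1 - gradxq x1 ya).
Proof.
rewrite (le_trans (normv_row_mx_le _ _)) //.
have := normvD_le (gradf x1 - gradf xa) (dphi1 xa - dphi1 x1).
have := normvD_le (gradf x1 - gradf xa + (dphi1 xa - dphi1 x1))
  (gradxq x1 y1 - gradxq x1 ya).
have := normvD_le (gradg y1 - gradg ya) (dphi2 ya - dphi2 y1).
have := Hflip x1 xa; have := Hglip y1 ya.
have := Hdphi1 xa x1; have := Hdphi2 ya y1; rewrite !(normvBC xa) !(normvBC ya).
lra.
Qed.

Lemma fine_Q x y : (h x < +oo)%E -> fine (Q x y) = q x y + fine (h x).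
Proof. by rewrite HQdec; have := h_neq_ninfty x; case: (h x). Qed.

Lemma Q_cont_on_domain : cont_on_domain (uncurryv Q).
Proof.
move=> z Qz e e0; have e20 : 0 < e / 2 by rewrite divr_gt0.
have hz : (h (lsubmx z) < +oo)%E by rewrite -(Q_lt_pinfty _ (rsubmx z)).
have [del1 del10 H1] := Hqcont Qz e20; have [del2 del20 H2] := Hhcont hz e20.
exists (Num.min del1 del2) => [|z' Qz']; first by rewrite lt_min del10.
have hz' : (h (lsubmx z') < +oo)%E by rewrite -(Q_lt_pinfty _ (rsubmx z')).
rewrite lt_min => /andP[/(H1 _ Qz') qz' /(le_lt_trans (normv_lsubmxB _ _))].
move=> /(H2 _ hz') hz'z.
move: qz'; rewrite /uncurryv !fine_Q // => qz'.
by have := ler_normD (q (lsubmx z') (rsubmx z') - q (lsubmx z) (rsubmx z))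
  (fine (h (lsubmx z')) - fine (h (lsubmx z))); rewrite addrACA opprD; lra.
Qed.

Lemma L_cont_on_domain : cont_on_domain (uncurryv L).
Proof.
rewrite uncurryv_Lobj; apply: cont_on_domainD Q_cont_on_domain (has_grad_split Hf Hg).
exact: HQproper.1.
Qed.

Lemma L_fin z : domain (uncurryv Q) z -> uncurryv L z \is a fin_num.
Proof.
rewrite uncurryv_Lobj /domain /= => Qz; rewrite fin_numD andbT fin_numE -ltey Qz andbT.
exact: HQproper.1.
Qed.

Variables (x xh : nat -> 'rV[R]_n) (y yh : nat -> 'rV[R]_m).
Hypothesis Hxmin : forall k, x_step_min (xh k) (yh k) (x k.+1).
Hypothesis Hymin : forall k, y_step_min (yh k) (x k.+1) (y k.+1).
Hypothesis Hdom : forall k, (Q (x k.+1) (y k.+1) < +oo)%E.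
Hypothesis Hsafe : forall k, (L (xh k.+1) (yh k.+1) <= L (x k.+1) (y k.+1))%E.

Let z k := row_mx (x k) (y k).
Let ell k := fine (L (x k.+1) (y k.+1)).
Let gap k := (theta1 - Lf) / 2 * normv (x k.+2 - xh k.+1) ^+ 2
           + (theta2 - Lg) / 2 * normv (y k.+2 - yh k.+1) ^+ 2.

Lemma L_iterate k : uncurryv L (z k.+1) = (ell k)%:E.
Proof.
have := @L_fin (z k.+1); rewrite /domain /= /z !uncurryv_row_mx => /(_ (Hdom k)).
by move=> /fineK.
Qed.

Lemma ell_decrease k : ell k.+1 + gap k <= ell k.
Proof.
have := le_trans (step_decrease (Hxmin k.+1) (Hymin k.+1)) (Hsafe k).
by have := L_iterate k; have := L_iterate k.+1; rewrite /z !uncurryv_row_mx => -> ->.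
Qed.

Lemma gap_ge0 k : 0 <= gap k.
Proof. by rewrite addr_ge0 // mulr_ge0 ?sqr_ge0 // divr_ge0 // subr_ge0 ltW. Qed.

Lemma ell_le_ell0 k : ell k <= ell 0.
Proof.
by elim: k => // k; apply: le_trans; have := ell_decrease k; have := gap_ge0 k; lra.
Qed.

Let lstar := inf (range ell).

Lemma ell_gap_cvg : cvgr ell lstar /\ cvgr gap 0.
Proof.
apply: nonincreasing_gap_cvg gap_ge0 ell_decrease.
have [c Hc] := HLbdd; exists c => _ [k _ <-].
by have := Hc (x k.+1) (y k.+1); rewrite -(uncurryv_row_mx (Lobj f Q g)) L_iterate.
Qed.

Lemma steps_cvg0 : cvgr (fun k => normv (x k.+1 - xh k)) 0 /\
                   cvgr (fun k => normv (y k.+1 - yh k)) 0.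
Proof.
have c1 : 0 < (theta1 - Lf) / 2 by rewrite divr_gt0 // subr_gt0.
have c2 : 0 < (theta2 - Lg) / 2 by rewrite divr_gt0 // subr_gt0.
have gap_x k : (theta1 - Lf) / 2 * normv (x k.+2 - xh k.+1) ^+ 2 <= gap k.
  by rewrite /gap lerDl mulr_ge0 ?sqr_ge0 // ltW.
have gap_y k : (theta2 - Lg) / 2 * normv (y k.+2 - yh k.+1) ^+ 2 <= gap k.
  by rewrite /gap lerDr mulr_ge0 ?sqr_ge0 // ltW.
split; apply: cvgr_shiftS.
  exact: cvgr_sqr_le0 c1 (fun k => normv_ge0 _) gap_x ell_gap_cvg.2.
exact: cvgr_sqr_le0 c2 (fun k => normv_ge0 _) gap_y ell_gap_cvg.2.
Qed.

Lemma iterates_bounded : exists B, forall k, normv (z k) <= B /\ normv (yh k) <= B.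
Proof.
have [r Hr] := Hcoer (ell 0).
have sublevel w : (uncurryv L w <= (ell 0)%:E)%E -> normv w <= r.
  by move=> Lw; rewrite leNgt; apply/negP => /Hr /lt_le_trans /(_ Lw); rewrite ltxx.
have z_le k : normv (z k.+1) <= r by apply: sublevel; rewrite L_iterate lee_fin ell_le_ell0.
have zh_le k : normv (row_mx (xh k.+1) (yh k.+1)) <= r.
  apply: sublevel; rewrite uncurryv_row_mx (le_trans (Hsafe k)) //.
  by rewrite -(uncurryv_row_mx (Lobj f Q g)) L_iterate lee_fin ell_le_ell0.
exists (Num.max (Num.max r (normv (z 0))) (Num.max r (normv (row_mx (xh 0) (yh 0))))) => k.
split; rewrite le_max; apply/orP; [left|right].
  exact: normv_le_max_succ z_le k.
apply: le_trans (normv_le_max_succ (u := fun k => row_mx (xh k) (yh k)) zh_le k).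
by rewrite -[X in normv X <= _](row_mxKr (xh k)) normv_rsubmx.
Qed.

Lemma cluster_points_dom : cluster_points z `<=` domain (uncurryv Q).
Proof.
apply: (@cluster_points_sub _ _ z _ HdomQ) => k.
by rewrite /domain /= /z uncurryv_row_mx.
Qed.

Lemma L_subseq_cvg zh (psi : nat -> nat) : cluster_points z zh ->
  cvgv (fun j => z (psi j).+1) zh -> cvgr (ell \o psi) (fine (uncurryv L zh)).
Proof.
move=> /cluster_points_dom Qzh cvg_psi.
have Lzh : (uncurryv L zh < +oo)%E by rewrite uncurryv_Lobj ltey_DEFin.
have Lz k : (uncurryv L (z k.+1) < +oo)%E by rewrite L_iterate ltry.
have := cvgr_cont_on_domain L_cont_on_domain Lzh (fun j => Lz (psi j)) cvg_psi.
by congr cvgr; apply/funext => j; rewrite /= L_iterate.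
Qed.

Lemma L_on_cluster_points zh : cluster_points z zh -> uncurryv L zh = lstar%:E.
Proof.
move=> Czh; have [psi [psi_ge cvg_psi]] := cluster_points_succ Czh.
rewrite -(fineK (L_fin (cluster_points_dom Czh))); congr EFin.
exact: cvgr_unique (L_subseq_cvg Czh cvg_psi) (cvgr_subseq psi_ge ell_gap_cvg.1).
Qed.

Let subgrad k := step_subgrad (xh k) (yh k) (x k.+1) (y k.+1).

Lemma subgrad_cvg0 : cvgv subgrad 0.
Proof.
have [B HB] := iterates_bounded.
have x_le k : normv (x k) <= B.
  by rewrite (le_trans _ (HB k).1) // -[X in normv X <= _](row_mxKl _ (y k)) normv_lsubmx.
have y_le k : normv (y k) <= B.
  by rewrite (le_trans _ (HB k).1) // -[X in normv X <= _](row_mxKr (x k)) normv_rsubmx.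
have D_bounded : boundedv [set row_mx a b | a in range (fun k => x k.+1)
                                         & b in range y `|` range yh].
  exists (B + B) => _ [_ [k _ <-] [b yb <-]]; rewrite (le_trans (normv_row_mx_le _ _)) //.
  by rewrite lerD //; case: yb => -[j _ <-]; [exact: y_le | exact: (HB j).2].
have D_dom a b : range (fun k => x k.+1) a -> (range y `|` range yh) b -> (Q a b < +oo)%E.
  by move=> [k _ <-] _; rewrite Q_lt_pinfty -(Q_lt_pinfty _ (y k.+1)) Hdom.
have [xi xi0 Hxi] := Hqlip D_bounded D_dom.
apply: cvgv_normv0; have [cvg_x cvg_y] := steps_cvg0.
apply: (@cvgr_squeeze0 _ _ (fun k => (Lf + eta1) * normv (x k.+1 - xh k)
                                   + (Lg + eta2 + xi) * normv (y k.+1 - yh k))) => [k|].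
  rewrite normv_ge0 /= (le_trans (normv_step_subgrad_le _ _ _ _)) //.
  have := Hxi (x k.+1) (y k.+1) (yh k) (ex_intro2 _ _ k I erefl)
    (or_introl (ex_intro2 _ _ k.+1 I erefl)) (or_intror (ex_intro2 _ _ k I erefl)).
  lra.
apply/cvgrE; rewrite [X in _ --> X](_ : 0 = (Lf + eta1) * 0 + (Lg + eta2 + xi) * 0).
  by apply: cvgD; apply: cvgMr; apply/cvgrE.
by rewrite !mulr0 addr0.
Qed.

Lemma cluster_points_crit : cluster_points z `<=` crit (uncurryv L).
Proof.
move=> zh Czh; have [psi [psi_ge cvg_psi]] := cluster_points_succ Czh.
apply: (lim_sub_closed (xs := fun j => z (psi j).+1) (vs := subgrad \o psi)).
- exact: L_fin (cluster_points_dom Czh).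
- by move=> j; apply: step_subgrad_lim_sub.
- exact: cvg_psi.
- have := L_subseq_cvg Czh cvg_psi.
  by congr cvgr; apply/funext => j; rewrite /= L_iterate.
- exact: cvgv_subseq psi_ge subgrad_cvg0.
Qed.

Theorem block_descent_cluster_points :
  let C := cluster_points z in
  [/\ [/\ C !=set0, compact C & exists c : R, forall zh, C zh -> uncurryv L zh = c%:E],
      C `<=` crit (uncurryv L) &
      cvgr (fun k => distv (z k) C) 0].
Proof.
have [B /all_and2[z_le _]] := iterates_bounded.
split; first split.
- exact: cluster_points_nonempty z_le.
- exact: cluster_points_compact z_le.
- by exists lstar; exact: L_on_cluster_points.
- exact: cluster_points_crit.
- exact: cvgr_distv_cluster_points z_le.
Qed.

End BlockProximalGradient.

Lemma safeguard_le (R : realType) (A B : Type) (F : A -> B -> \bar R) u v x1 y1 xh yh :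
  (if (F u v <= F x1 y1)%E then xh = u /\ yh = v else xh = x1 /\ yh = y1) ->
  (F xh yh <= F x1 y1)%E.
Proof. by case: ifP => [Fuv [-> ->] | _ [-> ->]]. Qed.

Unset Implicit Arguments.

Theorem lemma3p3 (R : realType) (n m : nat)
  (f : 'rV[R]_n -> R) (gradf : 'rV[R]_n -> 'rV[R]_n)
  (g : 'rV[R]_m -> R) (gradg : 'rV[R]_m -> 'rV[R]_m)
  (Q : 'rV[R]_n -> 'rV[R]_m -> \bar R)
  (q : 'rV[R]_n -> 'rV[R]_m -> R) (gradxq : 'rV[R]_n -> 'rV[R]_m -> 'rV[R]_n)
  (h : 'rV[R]_n -> \bar R)
  (phi1 : 'rV[R]_n -> R) (dphi1 : 'rV[R]_n -> 'rV[R]_n)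
  (phi2 : 'rV[R]_m -> R) (dphi2 : 'rV[R]_m -> 'rV[R]_m)
  (Lf Lg theta1 theta2 eta1 eta2 : R)
  (* (A1) *)
  (HLbdd : exists c : R, forall x y, (c%:E <= Lobj f Q g x y)%E)
  (Hf : has_grad f gradf) (Hfc : contv gradf) (Hflip : lipschitzv gradf Lf)
  (Hg : has_grad g gradg) (Hgc : contv gradg) (Hglip : lipschitzv gradg Lg)
  (HQproper : proper_fun (uncurryv Q)) (HQlsc : lsc (uncurryv Q))
  (Hphi1 : has_grad phi1 dphi1) (Hphi2 : has_grad phi2 dphi2)
  (Hphi1sc : strongly_convex phi1 theta1) (Hphi2sc : strongly_convex phi2 theta2)
  (Htheta1 : Lf < theta1) (Htheta2 : Lg < theta2)
  (Hdphi1 : lipschitzv dphi1 eta1) (Hdphi2 : lipschitzv dphi2 eta2)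
  (* (A2) *)
  (Hcoer : forall M : R, exists r : R, forall z : 'rV[R]_(n + m),
      r < normv z -> (M%:E < uncurryv (Lobj f Q g) z)%E)
  (HdomQ : closed (domain (uncurryv Q)))
  (Hsub : forall (x : 'rV[R]_n) (y : 'rV[R]_m), (Q x y < +oo)%E ->
      forall v w, lim_sub (fun x' => Q x' y) x v -> lim_sub (fun y' => Q x y') y w ->
      lim_sub (uncurryv Q) (row_mx x y) (row_mx v w))
  (HQdec : forall x y, Q x y = ((q x y)%:E + h x)%E)
  (Hhcont : forall x, (h x < +oo)%E -> forall e : R, 0 < e -> exists2 del : R, 0 < del &
      forall x', (h x' < +oo)%E -> normv (x' - x) < del ->
        `|fine (h x') - fine (h x)| < e)
  (Hqcont : forall z : 'rV[R]_(n + m), (uncurryv Q z < +oo)%E ->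
      forall e : R, 0 < e -> exists2 del : R, 0 < del &
      forall z', (uncurryv Q z' < +oo)%E -> normv (z' - z) < del ->
        `|uncurryv q z' - uncurryv q z| < e)
  (Hq1 : forall y, has_grad (fun x => q x y) (fun x => gradxq x y))
  (Hq1c : forall y, contv (fun x => gradxq x y))
  (Hqlip : forall (D1 : set 'rV[R]_n) (D2 : set 'rV[R]_m),
      boundedv [set row_mx x y | x in D1 & y in D2] ->
      (forall x y, D1 x -> D2 y -> (Q x y < +oo)%E) ->
      exists2 xi : R, 0 < xi & forall xb y yb, D1 xb -> D2 y -> D2 yb ->
        normv (gradxq xb y - gradxq xb yb) <= xi * normv (y - yb))
  (* the algorithm *)
  (x xh : nat -> 'rV[R]_n) (y yh : nat -> 'rV[R]_m)
  (xm1 : 'rV[R]_n) (ym1 : 'rV[R]_m)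
  (alpha beta : nat -> R) (amax bmax : R)
  (Hxh0 : xh 0%N = x 0%N) (Hyh0 : yh 0%N = y 0%N)
  (Hamax : 0 <= amax) (Hbmax : 0 <= bmax) (Hab : amax + bmax < 1)
  (Halpha : forall k, 0 <= alpha k <= amax) (Hbeta : forall k, 0 <= beta k <= bmax)
  (Hxstep : forall k,
      (Q (x k.+1) (yh k) + (dotv (gradf (xh k)) (x k.+1) + bregman phi1 dphi1 (x k.+1) (xh k))%:E
        < +oo)%E /\
      forall x' : 'rV[R]_n,
      (Q (x k.+1) (yh k) + (dotv (gradf (xh k)) (x k.+1) + bregman phi1 dphi1 (x k.+1) (xh k))%:E
       <= Q x' (yh k) + (dotv (gradf (xh k)) x' + bregman phi1 dphi1 x' (xh k))%:E)%E)
  (Hystep : forall k,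
      (Q (x k.+1) (y k.+1) + (dotv (gradg (yh k)) (y k.+1) + bregman phi2 dphi2 (y k.+1) (yh k))%:E
        < +oo)%E /\
      forall y' : 'rV[R]_m,
      (Q (x k.+1) (y k.+1) + (dotv (gradg (yh k)) (y k.+1) + bregman phi2 dphi2 (y k.+1) (yh k))%:E
       <= Q (x k.+1) y' + (dotv (gradg (yh k)) y' + bregman phi2 dphi2 y' (yh k))%:E)%E)
  (Hextra : forall k,
      let xprev := if k is k'.+1 then x k' else xm1 in
      let yprev := if k is k'.+1 then y k' else ym1 in
      let u := x k.+1 + alpha k *: (x k.+1 - x k) + beta k *: (x k - xprev) in
      let v := y k.+1 + alpha k *: (y k.+1 - y k) + beta k *: (y k - yprev) in
      if (Lobj f Q g u v <= Lobj f Q g (x k.+1) (y k.+1))%E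
      then xh k.+1 = u /\ yh k.+1 = v
      else xh k.+1 = x k.+1 /\ yh k.+1 = y k.+1) :
  let z := fun k => row_mx (x k) (y k) in
  let Lz := uncurryv (Lobj f Q g) in
  let C := cluster_points z in
  [/\ (* (i) *)
      [/\ C !=set0, compact C & exists c : R, forall zh, C zh -> Lz zh = c%:E],
      (* (ii) *)
      C `<=` crit Lz &
      (* (iii) *)
      cvgr (fun k => distv (z k) C) 0].
Proof.
have Hdom k : (Q (x k.+1) (y k.+1) < +oo)%E by have := (Hystep k).1; rewrite ltey_DEFin.
exact: (block_descent_cluster_points HLbdd Hf Hfc Hflip Hg Hgc Hglip HQproper
  Hphi1 Hphi2 Hphi1sc Hphi2sc Htheta1 Htheta2 Hdphi1 Hdphi2 Hcoer HdomQ Hsub HQdec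
  Hhcont Hqcont Hq1 Hqlip (fun k => (Hxstep k).2) (fun k => (Hystep k).2) Hdom
  (fun k => safeguard_le (Hextra k))).
Qed.
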